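(* Let $(x_n)_{n \in \mathbb{N}}$ be a sequence in $[0,1)$ with the following property: there exist $s \in \mathbb{N}$ and a positive real number $\gamma$ such that for infinitely many $N$ the point set $x_1, \ldots, x_N$ has a subset $x_{j_1}, \ldots, x_{j_M}$ with $M \geq \gamma N$ elements which has at most $s$ different distances between neighbouring elements. Then $(x_n)_{n \in \mathbb{N}}$ does not have Poissonian pair correlations.
   Context: For real $x$, $\|x\|$ denotes the distance from $x$ to the nearest integer. A sequence $(x_n)_{n\in\mathbb{N}}$ in $[0,1)$ has Poissonian pair correlations if for every $s \geq 0$, $$F_N(s) := \frac{1}{N}\#\left\{1 \leq l \neq m \leq N : \|x_l - x_m\| \leq \frac{s}{N}\right\} \to 2s \quad (N\to\infty).$$ For a finite point set in $[0,1)$, the distances between neighbouring elements (gaps) are the distances between consecutive points when the set is arranged in increasing order. *)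

From HB Require Import structures.
From mathcomp Require Import all_boot all_order all_algebra.
From mathcomp Require Import all_classical all_reals all_analysis.
Set Implicit Arguments. Unset Strict Implicit. Unset Printing Implicit Defensive.
Import Order.TTheory GRing.Theory Num.Theory.
Import numFieldNormedType.Exports.
Local Open Scope classical_set_scope.
Local Open Scope ring_scope.

Section Defs.
Variable R : realType.

Definition dnear (x : R) : R :=
  Num.min (x - (Num.floor x)%:~R) ((Num.floor x + 1)%:~R - x).

(* F_N(s) for the sequence x_1, x_2, ... given as x (n) for n >= 1;
   indices l, m in 1..N are represented by i.+1 with i : 'I_N *)
Definition pcF (x : nat -> R) (N : nat) (s : R) : R :=
  (N%:R)^-1 *
  (#|[set lm : 'I_N * 'I_N | (lm.1 != lm.2) &&
        (dnear (x (lm.1).+1 - x (lm.2).+1) <= s / N%:R)]|)%:R.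

Definition poissonian_pc (x : nat -> R) : Prop :=
  forall s : R, 0 <= s -> (fun N => pcF x N s) @ \oo --> 2 * s.

Definition gaps (l : seq R) : seq R :=
  let t := sort <=%R l in pairmap (fun a b => b - a) (head 0 t) (behead t).

Definition subpoints (x : nat -> R) (N : nat) (J : {set 'I_N}) : seq R :=
  [seq x (val j).+1 | j <- enum J].
End Defs.

From HB Require Import structures.
From mathcomp Require Import all_boot all_order all_algebra.
From mathcomp Require Import all_classical all_reals all_analysis.
From mathcomp Require Import ring lra.
Set Implicit Arguments.
Unset Strict Implicit.
Unset Printing Implicit Defensive.
Import Order.TTheory GRing.Theory Num.Theory.
Import numFieldNormedType.Exports.
Local Open Scope classical_set_scope.
Local Open Scope ring_scope.

(* The gaps between consecutive points of the subset sum to at most 1, so at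
   most gamma N / 4 of them exceed 4 / (gamma N). Every remaining gap value v
   is the exact distance x_l - x_m of at least as many ordered pairs (l, m) as
   its multiplicity, and these pairs are counted by N (F_N(vN) - F_N(vN - eta)).
   Since each F_N is nondecreasing and F_N(s) -> 2s pointwise, the convergence
   is uniform on compact sets, so this count is at most eps N for all such v
   once N is large. With at most s gap values, the subset then has at most
   gamma N / 2 + 1 points, which is less than gamma N. *)

Lemma sumr_pairmap_sub (R : zmodType) (x0 : R) (s : seq R) :
  \sum_(v <- pairmap (fun a b => b - a) x0 s) v = last x0 s - x0.
Proof.
elim: s x0 => [|y s IH] x0 /=; first by rewrite big_nil subrr.
by rewrite big_cons IH addrC addrA subrK.
Qed.

Lemma pairmap_sub_ge0 (R : numDomainType) (x0 : R) (s : seq R) :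
  path <=%R x0 s -> all (fun v => 0 <= v) (pairmap (fun a b => b - a) x0 s).
Proof.
elim: s x0 => [|y s IH] x0 //= /andP[x0y ys].
by rewrite subr_ge0 x0y IH.
Qed.

Lemma count_gt_mulr_le_sum (R : numDomainType) (g : seq R) (c : R) :
  all (fun v => 0 <= v) g -> (count (fun v => c < v) g)%:R * c <= \sum_(v <- g) v.
Proof.
elim: g => [|y g IH] /=; first by rewrite big_nil mul0r.
case/andP=> y0 /IH gc; rewrite big_cons natrD mulrDl lerD //.
by case: (boolP (c < y)) => [/ltW cy|_]; rewrite ?mul1r ?mul0r.
Qed.

Lemma count_le_size_undup_mulr (R : numDomainType) (T : eqType)
    (g : seq T) (P : pred T) (B : R) :
  0 <= B -> (forall v, v \in g -> P v -> (count_mem v g)%:R <= B) ->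
  (count P g)%:R <= (size (undup g))%:R * B.
Proof.
move=> B0 gB.
have -> : count P g = (\sum_(v <- undup g | P v) count_mem v g)%N.
  rewrite -sum1_count -(big_undup_iterop_count _ g P (fun _ => 1%N)).
  apply: eq_bigr => v _; case: count => // n.
  by rewrite iteropS iter_addn mul1n addn1.
rewrite natr_sum -sum1_size natr_sum mulr_suml [leRHS](bigID P) /= -[leLHS]addr0.
apply: lerD; last by apply: sumr_ge0 => v _; rewrite mul1r.
rewrite big_seq_cond [leRHS]big_seq_cond; apply: ler_sum => v /andP[vg Pv].
by rewrite mul1r gB // -mem_undup.
Qed.

Lemma uniq_pairmap_swap (T : eqType) (a : T) (r : seq T) :
  uniq r -> uniq (pairmap (fun u w => (w, u)) a r).
Proof.
move=> ur; apply: (@map_uniq _ _ fst).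
suff -> : map fst (pairmap (fun u w => (w, u)) a r) = r by [].
by elim: r a {ur} => //= b r IH a; rewrite IH.
Qed.

Lemma pairmap_swap_neq (T : eqType) (a : T) (r : seq T) :
  uniq (a :: r) -> all (fun p => p.1 != p.2) (pairmap (fun u w => (w, u)) a r).
Proof.
elim: r a => [|b r IH] a //=; rewrite inE negb_or => /andP[/andP[ab _] ubr].
by rewrite eq_sym ab IH.
Qed.

Definition diff_pairs (R : numDomainType) (T : finType) (f : T -> R) (v : R) :
    {set T * T} :=
  [set p | (p.1 != p.2) && (f p.1 - f p.2 == v)].

Section Gaps.
Variable R : realType.
Implicit Types (l : seq R) (v h B : R).

Lemma size_gaps l : size (gaps l) = (size l).-1.
Proof. by rewrite /gaps size_pairmap size_behead size_sort. Qed.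

Lemma gaps_ge0 l : all (fun v => 0 <= v) (gaps l).
Proof.
rewrite /gaps; have := sort_sorted (@le_total _ R) l.
by case: sort => //= a r; exact: pairmap_sub_ge0.
Qed.

Lemma sum_gaps_le1 l : (forall y, y \in l -> 0 <= y < 1) -> \sum_(v <- gaps l) v <= 1.
Proof.
move=> l01; rewrite /gaps.
have : forall y, y \in sort <=%R l -> 0 <= y < 1 by move=> y; rewrite mem_sort; exact: l01.
case: sort => [|a r] t01 /=; first by rewrite big_nil ler01.
rewrite sumr_pairmap_sub.
have /andP[a0 _] := t01 a (mem_head _ _).
have /andP[_ la1] := t01 _ (mem_last a r).
lra.
Qed.

Lemma count_gaps_le_card_diff_pairs (T : finType) (f : T -> R) (s : seq T) v :
  uniq s -> (count_mem v (gaps (map f s)) <= #|diff_pairs f v|)%N.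
Proof.
move=> us; rewrite /gaps sort_map.
have : uniq (sort (relpre f <=%R) s) by rewrite sort_uniq.
case: sort => [|a r] //= uar.
have -> : pairmap (fun u w => w - u) (f a) (map f r) =
          map (fun p => f p.1 - f p.2) (pairmap (fun u w => (w, u)) a r).
  by elim: r a {uar} => //= b r IH a; rewrite IH.
rewrite count_map -size_filter cardE; apply: uniq_leq_size.
  by rewrite filter_uniq // uniq_pairmap_swap //; case/andP: uar.
move=> p; rewrite mem_filter mem_enum inE => /andP[/= pv pP].
by rewrite inE pv (allP (pairmap_swap_neq uar) _ pP).
Qed.

Lemma size_le_gap_counts l h B :
  0 < h -> 0 <= B -> (forall y, y \in l -> 0 <= y < 1) ->
  (forall v, v \in gaps l -> v <= h -> (count_mem v (gaps l))%:R <= B) ->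
  (size l)%:R <= (size (undup (gaps l)))%:R * B + h^-1 + 1.
Proof.
move=> h0 B0 l01 hB.
have short := count_le_size_undup_mulr B0 hB.
have long : (count (fun v => h < v) (gaps l))%:R <= h^-1.
  rewrite -[h^-1]mul1r ler_pdivlMr //.
  exact: le_trans (count_gt_mulr_le_sum _ (gaps_ge0 l)) (sum_gaps_le1 l01).
have split_gaps : size (gaps l) =
    addn (count (fun v => v <= h) (gaps l)) (count (fun v => h < v) (gaps l)).
  rewrite -(count_predC (fun v => v <= h)); congr addn.
  by apply: eq_count => v; rewrite /= ltNge.
have : (size l <= (size (gaps l)).+1)%N by rewrite size_gaps leqSpred.
rewrite -(ler_nat R) split_gaps -addn1 !natrD; lra.
Qed.

Lemma card_le_short_diff_pairs (T : finType) (f : T -> R) (J : {set T}) (s : nat) h B :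
  0 < h -> 0 <= B -> (forall i, i \in J -> 0 <= f i < 1) ->
  (size (undup (gaps (map f (enum J)))) <= s)%N ->
  (forall v, 0 <= v <= h -> (#|diff_pairs f v|)%:R <= B) ->
  (#|J|)%:R <= s%:R * B + h^-1 + 1.
Proof.
move=> h0 B0 J01 gs fewB; rewrite cardE -(size_map f).
apply: le_trans (size_le_gap_counts h0 B0 _ _) _.
- by move=> y /mapP[i iJ ->]; apply: J01; rewrite -mem_enum.
- move=> v vg vh; apply: le_trans (fewB v _); last by rewrite (allP (gaps_ge0 _) v vg).
  by rewrite ler_nat count_gaps_le_card_diff_pairs ?enum_uniq.
by rewrite !lerD2r ler_wpM2r ?ler_nat.
Qed.

End Gaps.

Lemma dnear_id (R : realType) (d : R) : 0 <= d <= 2^-1 -> dnear d = d.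
Proof.
move=> /andP[d0 d2]; rewrite /dnear.
have -> : Num.floor d = 0.
  apply/eqP; rewrite real_floor_eq ?num_real //= d0 /= add0r.
  by apply: le_lt_trans d2 _; rewrite invf_lt1 ?ltr1n.
rewrite subr0 add0r; apply/min_idPl; lra.
Qed.

(* A monotone function is squeezed between its values on a grid of mesh [d],
   where pointwise convergence is uniform because the grid is finite. *)
Lemma nondecreasing_cvg_linear_uniform (R : realType) (F : nat -> R -> R) (c T e : R) :
  (forall N, {homo F N : a b / a <= b}) ->
  (forall t, 0 <= t -> (fun N => F N t) @ \oo --> c * t) -> 0 <= c -> 0 < e ->
  \forall N \near \oo, forall t, 0 <= t <= T -> `|F N t - c * t| <= e.
Proof.
move=> Fmono Fcvg c0 e0.
pose d := e / (c + 1); have d0 : 0 < d by rewrite divr_gt0 //; lra.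
have ed : e = c * d + d by rewrite /d; field; lra.
pose L := (Num.truncn (T / d)).+1.
have grid : \forall N \near \oo, forall j : 'I_L.+1,
    `|c * (j%:R * d) - F N (j%:R * d)| < d.
  apply: filter_forall => j.
  have := Fcvg (j%:R * d) (mulr_ge0 (ler0n _ _) (ltW d0)).
  by move/cvgrPdist_lt => /(_ d d0).
apply: filterS grid => N grid t /andP[t0 tT].
have /andP[jt tj] := truncn_itv (divr_ge0 t0 (ltW d0)).
set j := Num.truncn (t / d) in jt tj.
rewrite ler_pdivlMr // in jt; rewrite ltr_pdivrMr // in tj.
have jL : (j < L)%N by rewrite ltnS le_truncn // ler_wpM2r // invr_ge0 ltW.
have := grid (Ordinal (ltnW jL : (j < L.+1)%N)).
have := grid (Ordinal (jL : (j.+1 < L.+1)%N)) => /=.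
rewrite !ltr_distlC => /andP[_ hi] /andP[lo _].
rewrite -natr1 mulrDl mul1r in tj hi.
have Flo : F N (j%:R * d) <= F N t by apply: Fmono.
have Fhi : F N t <= F N (j%:R * d + d) by apply/Fmono/ltW.
have ct_lo : c * (j%:R * d) <= c * t by exact: ler_wpM2l.
have ct_hi : c * t <= c * (j%:R * d + d) by apply/ler_wpM2l/ltW.
rewrite ler_distl; apply/andP; split; lra.
Qed.

Section PairCorrelation.
Variables (R : realType) (x : nat -> R).

Definition close_pairs N (t : R) : {set 'I_N * 'I_N} :=
  [set p : 'I_N * 'I_N | (p.1 != p.2) && (dnear (x p.1.+1 - x p.2.+1) <= t)].

Lemma pcFE N s : pcF x N s = N%:R^-1 * (#|close_pairs N (s / N%:R)|)%:R.
Proof.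
by congr (_ * _%:R); apply: eq_card => p; rewrite inE; apply/idP/idP; rewrite in_setE.
Qed.

Lemma pcF_ge0 N s : 0 <= pcF x N s.
Proof. by rewrite pcFE mulr_ge0 ?invr_ge0. Qed.

Lemma pcF_nondecreasing N : {homo pcF x N : a b / a <= b}.
Proof.
move=> a b ab; rewrite !pcFE ler_wpM2l ?invr_ge0 // ler_nat.
apply/subset_leq_card/fintype.subsetP => p; rewrite !inE => /andP[-> pa] /=.
by rewrite (le_trans pa) // ler_wpM2r ?invr_ge0.
Qed.

Lemma card_close_pairs N t : (0 < N)%N ->
  (#|close_pairs N t|)%:R = N%:R * pcF x N (t * N%:R).
Proof.
move=> N0; have NR0 : N%:R != 0 :> R by rewrite pnatr_eq0 -lt0n.
by rewrite pcFE mulfK // mulVKf.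
Qed.

Lemma card_diff_pairs_le N v a : 0 <= v <= 2^-1 -> a < v ->
  (#|diff_pairs (fun i : 'I_N => x i.+1) v|)%:R <=
    (#|close_pairs N v|)%:R - (#|close_pairs N a|)%:R :> R.
Proof.
move=> v012 av.
have sub : close_pairs N a \subset close_pairs N v.
  apply/fintype.subsetP => p; rewrite !inE => /andP[-> pa].
  exact: le_trans pa (ltW av).
rewrite -natrB ?subset_leq_card // ler_nat.
have -> : (#|close_pairs N v| - #|close_pairs N a| =
           #|close_pairs N v :\: close_pairs N a|)%N by rewrite cardsD (finset.setIidPr sub).
apply/subset_leq_card/fintype.subsetP => p; rewrite !inE => /andP[-> /eqP pv].
by rewrite pv dnear_id //= lexx andbT -ltNge.
Qed.

Lemma poissonian_pc_card_diff_pairs (K e : R) : poissonian_pc x -> 0 < e ->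
  \forall N \near \oo, forall v, 0 <= v <= 2^-1 -> v <= K / N%:R ->
    (#|diff_pairs (fun i : 'I_N => x i.+1) v|)%:R <= e * N%:R.
Proof.
move=> Pois e0.
have unif := nondecreasing_cvg_linear_uniform K pcF_nondecreasing Pois
  (ler0n R 2) (divr_gt0 e0 (ltr0n R 4)).
near=> N => v v012 vK.
have N0 : (0 < N)%N by near: N; exact: nbhs_infty_gt.
have NR : 0 < N%:R :> R by rewrite ltr0n.
have unifN : forall t, 0 <= t <= K -> `|pcF x N t - 2 * t| <= e / 4 by near: N.
pose b := v * N%:R.
have b0 : 0 <= b by case/andP: v012 => v0 _; rewrite mulr_ge0 ?ler0n.
have bK : b <= K by rewrite -ler_pdivlMr.
have Fb : pcF x N b <= 2 * b + e / 4.
  by have := unifN b; rewrite b0 bK ler_distl => /(_ isT) /andP[].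
have Fa : 2 * (b - e / 4) - e / 4 <= pcF x N (b - e / 4).
  have [a0|a0] := leP 0 (b - e / 4); last by have := pcF_ge0 N (b - e / 4); lra.
  have aK : b - e / 4 <= K by lra.
  by have := unifN (b - e / 4); rewrite a0 aK ler_distl => /(_ isT) /andP[].
have ab : (b - e / 4) / N%:R < v by rewrite ltr_pdivrMr // -/b; lra.
apply: le_trans (card_diff_pairs_le N v012 ab) _.
rewrite !card_close_pairs // divfK ?gt_eqF // -mulrBr mulrC ler_wpM2r ?ler0n //.
lra.
Unshelve. all: by end_near.
Qed.

End PairCorrelation.

Theorem proposition1 (R : realType) (x : nat -> R) :
  (forall n : nat, (1 <= n)%N -> 0 <= x n < 1) ->
  (exists (s : nat) (gamma : R), 0 < gamma /\
     forall N0 : nat, exists N : nat, (N0 <= N)%N /\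
       exists J : {set 'I_N},
         gamma * N%:R <= (#|J|)%:R /\
         (size (undup (gaps (subpoints x J))) <= s)%N) ->
  ~ poissonian_pc x.
Proof.
move=> x01 [s [g [g0 Hsub]]] Pois.
pose e := g / (4 * s.+1%:R).
have e0 : 0 < e by rewrite divr_gt0 // mulr_gt0 // ltr0n.
have se : s%:R * e <= g / 4.
  have -> : g / 4 = s.+1%:R * e by rewrite /e; field.
  by rewrite ler_wpM2r ?ler_nat // ltW.
have [N1 _ few] := poissonian_pc_card_diff_pairs (4 / g) Pois e0.
have [N2 _ large] := nbhs_infty_gtr (8 / g).
have [N [leN [J [gJ hs]]]] := Hsub (maxn N1 N2).
have {few} few := few N (leq_trans (leq_maxl _ _) leN).
have gN : 8 < g * N%:R.
  by rewrite mulrC -ltr_pdivrMr //; apply: large; apply: leq_trans (leq_maxr _ _) leN.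
have NR : 0 < N%:R :> R by rewrite -(pmulr_rgt0 _ g0); lra.
have h0 : 0 < 4 / g / N%:R by rewrite !divr_gt0.
have h12 : 4 / g / N%:R <= 2^-1 by rewrite !ler_pdivrMr //; lra.
have J01 (j : 'I_N) : j \in J -> 0 <= x j.+1 < 1 by move=> _; exact: x01.
have short v : 0 <= v <= 4 / g / N%:R ->
    (#|diff_pairs (fun j : 'I_N => x j.+1) v|)%:R <= e * N%:R.
  by case/andP=> v0 vh; apply: few; rewrite ?v0 ?(le_trans vh h12).
have := card_le_short_diff_pairs h0 (mulr_ge0 (ltW e0) (ltW NR)) J01 hs short.
have key : s%:R * (e * N%:R) <= g / 4 * N%:R by rewrite mulrA ler_wpM2r ?ler0n.
rewrite !invf_div; lra.
Qed.
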